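(* Let $f$ satisfy the standing assumptions (A) and let $a$ be defined as below. Assume there exists $\tilde\sigma>\sigma$ such that $a$ is nondecreasing on $[\sigma,\tilde\sigma]$. Then there exists a sequence $(f_n)_{n\in\mathbb{N}}$ of convex functions with $f_n(0)=0$ and $f_n(s)/s\to\infty$ as $s\to\infty$ such that: (i) $f_n\in C^1([0,+\infty))\cap C^3((0,+\infty))$; (ii) $f_n\to f$ uniformly on compact subsets of $[0,+\infty)$; (iii) $f_n'(0)=0$, $f_n'$ decreases in $n$ to $f'$ and $f_n'\to f'$ uniformly on compact subsets of $[0,+\infty)$; (iv) $f_n''>0$ on $(0,+\infty)$; (v) $\lim_{s\to0^+}\frac{sf_n''(s)-f_n'(s)}{s^3}=0$ and $\lim_{s\to0^+}\frac{f_n'(s)}{s}=0$ for each $n$; (vi) $\lim_{n\to\infty}\frac{sf_n''(s)-f_n'(s)}{s^3}=0$ and $\lim_{n\to\infty}\frac{f_n'(s)}{s}=0$ uniformly on compact subsets of $[0,\sigma)$; (vii) $a_n\to a$ uniformly on compact subsets of $(0,+\infty)$ and $b_n\to b$ uniformly on compact subsets of $(\sigma,+\infty)$; and (viii) if moreover $f\in C^2((0,+\infty))$, then $f_n''\to f''$ uniformly on compact subsets of $(0,+\infty)$.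
   Context: Standing assumptions (A) on $f:[0,+\infty)\to\mathbb{R}$: $f$ convex, nondecreasing, and there is $\sigma>0$ with $f\in C^1([0,+\infty))\cap C^3((\sigma,+\infty))$; $f(0)=0$ and $\lim_{s\to+\infty}f(s)/s=+\infty$; $f'(s)=0$ for $0\le s\le\sigma$; $f''(s)>0$ for $s>\sigma$. Define $a(s)=\frac{f'(s)}{sf''(s)}$ and $b(s)=\frac{s^2}{f''(s)}$ for $s>\sigma$, and $a(s)=b(s)=0$ for $0\le s\le\sigma$; and $a_n(s)=\frac{f_n'(s)}{sf_n''(s)}$, $b_n(s)=\frac{s^2}{f_n''(s)}$ for $s>0$. *)

From Stdlib Require Import Reals Rtopology.
Open Scope R_scope.

Definition cont_on (D : R -> Prop) (g : R -> R) : Prop :=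
  forall x, D x -> limit1_in g D (g x) x.

(* g' is the derivative of g at every point of D, relative to D
   (one-sided at a closed endpoint such as 0 for D = [0,+oo)). *)
Definition deriv_on (D : R -> Prop) (g g' : R -> R) : Prop :=
  forall x, D x ->
    limit1_in (fun y => (g y - g x) / (y - x)) (fun y => D y /\ y <> x) (g' x) x.

Definition convex_on (D : R -> Prop) (g : R -> R) : Prop :=
  forall x y t, D x -> D y -> 0 <= t <= 1 ->
    g (t * x + (1 - t) * y) <= t * g x + (1 - t) * g y.

Definition nondecr_on (D : R -> Prop) (g : R -> R) : Prop :=
  forall x y, D x -> D y -> x <= y -> g x <= g y.

Definition superlinear (g : R -> R) : Prop :=
  forall M, exists T, forall s, T < s -> M < g s / s.

Definition unif_cv_on (K : R -> Prop) (gn : nat -> R -> R) (g : R -> R) : Prop :=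
  forall eps, 0 < eps -> exists N : nat, forall n x, (N <= n)%nat -> K x ->
    Rabs (gn n x - g x) < eps.

Definition unif_cv_compacts (D : R -> Prop) (gn : nat -> R -> R) (g : R -> R) : Prop :=
  forall K, compact K -> (forall x, K x -> D x) -> unif_cv_on K gn g.

Definition Ici0 (x : R) : Prop := 0 <= x.
Definition Ioi (c x : R) : Prop := c < x.

(* a and b of the paper, for f' = f1, f'' = f2 (f2 only meaningful on (sigma,+oo)) *)
Definition a_fun (sigma : R) (f1 f2 : R -> R) (s : R) : R :=
  if Rlt_dec sigma s then f1 s / (s * f2 s) else 0.
Definition b_fun (sigma : R) (f2 : R -> R) (s : R) : R :=
  if Rlt_dec sigma s then s ^ 2 / f2 s else 0.

Definition an_fun (g1 g2 : R -> R) (s : R) : R := g1 s / (s * g2 s).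
Definition bn_fun (g2 : R -> R) (s : R) : R := s ^ 2 / g2 s.

(* Standing assumptions (A) on f, with f' = f1, f'' = f2, f''' = f3 on (sigma,+oo). *)
Definition assumptions_A (sigma : R) (f f1 f2 f3 : R -> R) : Prop :=
  0 < sigma /\
  convex_on Ici0 f /\ nondecr_on Ici0 f /\
  deriv_on Ici0 f f1 /\ cont_on Ici0 f1 /\
  deriv_on (Ioi sigma) f1 f2 /\ deriv_on (Ioi sigma) f2 f3 /\ cont_on (Ioi sigma) f3 /\
  f 0 = 0 /\ superlinear f /\
  (forall s, 0 <= s <= sigma -> f1 s = 0) /\
  (forall s, sigma < s -> 0 < f2 s).

From Stdlib Require Import Reals Rtopology Lra Lia Classical.
From Coquelicot Require Import Coquelicot.
Open Scope R_scope.

(** Extend [f] by [0] to the negative axis, let [F1] be a primitive of [f] and [F2]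
  a primitive of [F1].  For a step [e > 0] the second difference quotient
      [sdq F2 e s = (F2 (s+2e) - 2 F2 (s+e) + F2 s) / e^2]
  is an average of [f] over [[s, s+2e]].  Its derivatives are [sdq F1 e], [sdq f e]
  and [sdq f' e], so it is [C^3] since [f] is [C^1], and by the mean value theorem
  each of them is the corresponding derivative of [f] at a point of [[s, s+2e]];
  this gives all the uniform convergences.  The approximants are
      [f_n = sdq F2 e_n - sdq F2 e_n 0 + P_n],   [e_n = sigma / 2^(n+2)],
  where [P_n] is the primitive of the correction [p_n = q^(n+2) / (n+1)^2],
  [q s = s^2/(1+s^2)], which makes [f_n''] positive on [(0,+oo)] and is all that
  remains of [f_n] near [0], where [f] vanishes.  Since [f'] is nondecreasing,
  halving the step decreases [f_n'].  The delicate item is [a_n -> a] near [sigma]: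
  there the monotonicity of [a] gives [f_n' <= ((s+2e_n) a(s+2e_n) + O(s/n)) f_n''],
  and [a(sigma+) = 0] by a Gronwall argument. *)

Lemma is_derive_eq (G : R -> R) x a b : is_derive G x a -> a = b -> is_derive G x b.
Proof. now intros H <-. Qed.

Lemma is_derive_add (G H : R -> R) x a b :
  is_derive G x a -> is_derive H x b -> is_derive (fun y => G y + H y) x (a + b).
Proof. exact (is_derive_plus G H x a b). Qed.

Lemma is_derive_sub (G H : R -> R) x a b :
  is_derive G x a -> is_derive H x b -> is_derive (fun y => G y - H y) x (a - b).
Proof. exact (is_derive_minus G H x a b). Qed.

Lemma is_derive_mulc (G : R -> R) x k a :
  is_derive G x a -> is_derive (fun y => k * G y) x (k * a).
Proof. exact (is_derive_scal G x k a). Qed.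

Lemma is_derive_cst (c x : R) : is_derive (fun _ => c) x 0.
Proof. exact (is_derive_const (K:=R_AbsRing) c x). Qed.

Lemma is_derive_shift (G : R -> R) x c a :
  is_derive G (x + c) a -> is_derive (fun y => G (y + c)) x a.
Proof.
  intros H. apply (is_derive_eq _ _ (scal 1 a)); [|apply (scal_one a)].
  apply (is_derive_comp G (fun y => y + c) x a 1 H).
  apply (is_derive_eq _ _ (1 + 0)); [|apply Rplus_0_r].
  apply is_derive_add; [apply (is_derive_id (K:=R_AbsRing)) | apply is_derive_cst].
Qed.

Lemma is_derive_local (G H : R -> R) x l :
  (exists r, 0 < r /\ forall t, Rabs (t - x) < r -> G t = H t) ->
  is_derive G x l -> is_derive H x l.
Proof.
  intros [r [Hr E]] HG. apply is_derive_Reals in HG. apply is_derive_Reals.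
  intros eps Heps. destruct (HG eps Heps) as [del Hdel].
  assert (Hm : 0 < Rmin del r) by (apply Rmin_pos; [apply cond_pos | lra]).
  exists (mkposreal _ Hm). intros h Hh Hhd. simpl in Hhd.
  rewrite <- !E.
  - apply Hdel; auto. eapply Rlt_le_trans; [exact Hhd | apply Rmin_l].
  - rewrite Rminus_diag, Rabs_R0; lra.
  - replace (x + h - x) with h by ring. eapply Rlt_le_trans; [exact Hhd | apply Rmin_r].
Qed.

Lemma continuity_of_is_derive (G : R -> R) x l : is_derive G x l -> continuity_pt G x.
Proof.
  intro H. apply continuity_pt_filterlim.
  apply (ex_derive_continuous (K:=R_AbsRing) (V:=R_NormedModule)). now exists l.
Qed.

Lemma is_derive_RInt0 (g : R -> R) : (forall x, continuity_pt g x) ->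
  forall x, is_derive (fun b => RInt g 0 b) x (g x).
Proof.
  intros Hc x. apply (is_derive_RInt g (fun b => RInt g 0 b) 0 x).
  - apply filter_forall. intro b. apply (RInt_correct (V:=R_CompleteNormedModule)).
    apply (ex_RInt_continuous (V:=R_CompleteNormedModule)).
    intros z _. apply continuity_pt_filterlim, Hc.
  - apply continuity_pt_filterlim, Hc.
Qed.

Lemma continuity_lin (g1 g2 : R -> R) a b x : continuity_pt g1 x -> continuity_pt g2 x ->
  continuity_pt (fun y => a * g1 y + b * g2 y) x.
Proof.
  intros H1 H2. apply (continuity_pt_plus (fun y => a * g1 y) (fun y => b * g2 y)).
  - exact (continuity_pt_scal g1 a x H1).
  - exact (continuity_pt_scal g2 b x H2).
Qed.

Lemma continuity_shift (g : R -> R) x c :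
  continuity_pt g (x + c) -> continuity_pt (fun y => g (y + c)) x.
Proof.
  intros H. apply (continuity_pt_comp (fun y => y + c) g); [|exact H].
  apply (continuity_pt_plus (fun y => y) (fun _ => c)).
  - apply derivable_continuous_pt, derivable_pt_id.
  - apply continuity_pt_const. now intros a b.
Qed.

Lemma mvt_open (G g : R -> R) a b : a <= b ->
  (forall x, a < x < b -> is_derive G x (g x)) ->
  (forall x, a <= x <= b -> continuity_pt G x) ->
  exists c, a <= c <= b /\ G b - G a = g c * (b - a).
Proof.
  intros Hab Hd Hc.
  destruct (MVT_gen G a b g) as [c [Hc1 Hc2]];
    rewrite ?Rmin_left, ?Rmax_right in * by lra; auto.
  now exists c.
Qed.

Lemma mvt_closed (G g : R -> R) a b : a <= b ->
  (forall x, a <= x <= b -> is_derive G x (g x)) ->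
  exists c, a <= c <= b /\ G b - G a = g c * (b - a).
Proof.
  intros Hab Hd. apply mvt_open; auto.
  - intros x Hx; apply Hd; lra.
  - intros x Hx; apply (continuity_of_is_derive _ _ (g x)); auto.
Qed.

Lemma nondecr_of_deriv_nonneg (G g : R -> R) a b : a <= b ->
  (forall x, a <= x <= b -> is_derive G x (g x)) ->
  (forall x, a <= x <= b -> 0 <= g x) -> G a <= G b.
Proof.
  intros Hab Hd Hg. destruct (mvt_closed G g a b Hab Hd) as [c [Hc E]].
  assert (0 <= g c * (b - a)) by (apply Rmult_le_pos; [apply Hg; lra | lra]). lra.
Qed.

Lemma convex_of_nondecr_deriv (G g : R -> R) : (forall x, is_derive G x (g x)) ->
  (forall x y, 0 <= x -> x <= y -> g x <= g y) -> convex_on Ici0 G.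
Proof.
  intros Hd Hm.
  assert (Key : forall x y t, 0 <= x -> x <= y -> 0 <= t <= 1 ->
    G (t * x + (1 - t) * y) <= t * G x + (1 - t) * G y).
  { intros x y t Hx Hxy Ht. set (z := t * x + (1 - t) * y).
    destruct (mvt_closed G g x z ltac:(unfold z; nra) (fun u _ => Hd u)) as [c1 [Hc1 E1]].
    destruct (mvt_closed G g z y ltac:(unfold z; nra) (fun u _ => Hd u)) as [c2 [Hc2 E2]].
    assert (g c1 <= g c2) by (apply Hm; lra).
    assert (E : t * G x + (1 - t) * G y - G z = t * (1 - t) * (y - x) * (g c2 - g c1)).
    { replace (t * G x + (1 - t) * G y - G z) with
        (- t * (G z - G x) + (1 - t) * (G y - G z)) by ring.
      rewrite E1, E2. unfold z. ring. }
    assert (0 <= t * (1 - t) * (y - x)) by (apply Rmult_le_pos; nra).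
    nra. }
  intros x y t Hx Hy Ht. unfold Ici0 in *. destruct (Rle_dec x y); [now apply Key|].
  replace (t * x + (1 - t) * y) with ((1 - t) * y + (1 - (1 - t)) * x) by ring.
  replace (t * G x + (1 - t) * G y) with ((1 - t) * G y + (1 - (1 - t)) * G x) by ring.
  apply Key; lra.
Qed.

(** Gronwall: a function vanishing at [a] with [g' <= L g] on [(a,b)] is [<= 0] at [b]
    (because [g e^(-L x)] is nonincreasing). *)
Lemma gronwall_zero (g g' : R -> R) a b L : a <= b ->
  (forall x, a < x < b -> is_derive g x (g' x)) ->
  (forall x, a <= x <= b -> continuity_pt g x) ->
  (forall x, a < x < b -> g' x <= L * g x) -> g a = 0 -> g b <= 0.
Proof.
  intros Hab Hd Hc Hle Ha.
  set (h := fun x => g x * exp (- L * x)).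
  assert (Hdexp : forall x, is_derive (fun w => exp (- L * w)) x ((- L * 1) * exp (- L * x))).
  { intro x. apply (is_derive_comp exp (fun w => - L * w)).
    - apply is_derive_exp.
    - apply is_derive_mulc, (is_derive_id (K:=R_AbsRing)). }
  set (dh := fun x => if Rlt_dec a x then if Rlt_dec x b then
                          (g' x - L * g x) * exp (- L * x) else 0 else 0).
  assert (Hdh : forall x, dh x <= 0).
  { intro x. unfold dh. destruct (Rlt_dec a x); destruct (Rlt_dec x b); try lra.
    pose proof (Hle x ltac:(lra)). pose proof (exp_pos (- L * x)).
    apply Rmult_le_0_r; lra. }
  destruct (mvt_open h dh a b Hab) as [c [Hc' E]].
  - intros x Hx. unfold dh.
    destruct (Rlt_dec a x); destruct (Rlt_dec x b); try lra. unfold h.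
    replace ((g' x - L * g x) * exp (- L * x)) with
      (g' x * exp (- L * x) + g x * ((- L * 1) * exp (- L * x))) by ring.
    apply (is_derive_mult (K:=R_AbsRing) g (fun w => exp (- L * w))); auto.
    intros; apply Rmult_comm.
  - intros x Hx. unfold h. apply continuity_pt_mult; [now apply Hc|].
    apply (continuity_of_is_derive _ _ _ (Hdexp x)).
  - unfold h in E. rewrite Ha, Rmult_0_l in E. pose proof (Hdh c).
    pose proof (exp_pos (- L * b)).
    assert (dh c * (b - a) <= 0) by (apply Rmult_le_0_r; lra). nra.
Qed.

(** ** Second difference quotients *)

Definition sdq (G : R -> R) (e x : R) : R := (G (x + 2 * e) - 2 * G (x + e) + G x) / e ^ 2.

Lemma second_difference_mvt1 (G g : R -> R) x e : 0 < e ->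
  (forall y, x <= y <= x + 2 * e -> is_derive G y (g y)) ->
  exists z1 z2, x <= z1 <= x + e /\ x + e <= z2 <= x + 2 * e /\
    G (x + 2 * e) - 2 * G (x + e) + G x = e * (g z2 - g z1).
Proof.
  intros He Hd.
  destruct (mvt_closed G g x (x + e)) as [z1 [Hz1 E1]]; [lra | intros; apply Hd; lra |].
  destruct (mvt_closed G g (x + e) (x + 2 * e)) as [z2 [Hz2 E2]]; [lra | intros; apply Hd; lra |].
  replace (x + e - x) with e in E1 by ring.
  replace (x + 2 * e - (x + e)) with e in E2 by ring.
  exists z1, z2. repeat split; lra.
Qed.

Lemma sdq_mvt2 (G g h : R -> R) x e : 0 < e ->
  (forall y, x <= y <= x + 2 * e -> is_derive G y (g y)) ->
  (forall y, x <= y <= x + 2 * e -> is_derive g y (h y)) ->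
  exists z, x <= z <= x + 2 * e /\ sdq G e x = h z.
Proof.
  intros He HG Hg.
  destruct (mvt_closed (fun y => G (y + e) - G y) (fun y => g (y + e) - g y) x (x + e))
    as [c [Hc E1]]; [lra | |].
  { intros y Hy. apply is_derive_sub; [apply is_derive_shift, HG | apply HG]; lra. }
  destruct (mvt_closed g h c (c + e)) as [z [Hz E2]]; [lra | intros y Hy; apply Hg; lra |].
  exists z. split; [lra|]. unfold sdq.
  replace (x + 2 * e) with (x + e + e) by ring.
  replace (c + e - c) with e in E2 by ring. replace (x + e - x) with e in E1 by ring.
  field_simplify_eq; [nra | lra].
Qed.

Lemma sdq_nonneg (G g : R -> R) x e : 0 < e ->
  (forall y, x <= y <= x + 2 * e -> is_derive G y (g y)) ->
  (forall y z, y <= z -> g y <= g z) -> 0 <= sdq G e x.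
Proof.
  intros He Hd Hm. destruct (second_difference_mvt1 G g x e He Hd) as (z1 & z2 & Hz1 & Hz2 & E).
  unfold sdq. rewrite E. pose proof (Hm z1 z2 ltac:(lra)).
  apply Rdiv_le_0_compat; nra.
Qed.

(** If [G'''] is nonnegative ([G''] nondecreasing), halving the step decreases [sdq G]:
    third differences of [G] are nonnegative. *)
Lemma sdq_halve_step (G g h : R -> R) x e : 0 < e ->
  (forall y, is_derive G y (g y)) -> (forall y, is_derive g y (h y)) ->
  (forall y z, y <= z -> h y <= h z) -> sdq G e x <= sdq G (2 * e) x.
Proof.
  intros He HG Hg Hh.
  set (d3 := fun y => G (y + 3 * e) - 3 * G (y + 2 * e) + 3 * G (y + e) - G y).
  assert (H3 : forall y, 0 <= d3 y).
  { intro y.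
    destruct (second_difference_mvt1 (fun t => G (t + e) - G t) (fun t => g (t + e) - g t) y e He)
      as (z1 & z2 & Hz1 & Hz2 & E).
    { intros t Ht. apply is_derive_sub; [apply is_derive_shift|]; apply HG. }
    assert (g (z1 + e) - g z1 <= g (z2 + e) - g z2).
    { apply (nondecr_of_deriv_nonneg (fun t => g (t + e) - g t) (fun t => h (t + e) - h t));
        [lra | |].
      - intros t Ht. apply is_derive_sub; [apply is_derive_shift|]; apply Hg.
      - intros t Ht. pose proof (Hh t (t + e)). lra. }
    unfold d3. replace (y + 2 * e + e) with (y + 3 * e) in E by ring.
    replace (y + 2 * e) with (y + e + e) in * by ring.
    replace (y + 3 * e) with (y + e + e + e) in * by ring. nra. }
  pose proof (H3 x) as H0. pose proof (H3 (x + e)) as H1. unfold d3, sdq in *.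
  replace (x + 2 * (2 * e)) with (x + e + 3 * e) by ring.
  replace (x + e + 2 * e) with (x + 3 * e) in H1 by ring.
  replace (x + e + e) with (x + 2 * e) in H1 by ring.
  apply Rmult_le_reg_r with (4 * e ^ 2); [nra|].
  unfold Rdiv. rewrite !Rmult_assoc.
  replace (/ e ^ 2 * (4 * e ^ 2)) with 4 by (field; lra).
  replace (/ (2 * e) ^ 2 * (4 * e ^ 2)) with 1 by (field; lra). nra.
Qed.

Lemma is_derive_sdq (G g : R -> R) e x : (forall y, is_derive G y (g y)) ->
  is_derive (sdq G e) x (sdq g e x).
Proof.
  intros Hd.
  assert (E : forall (F : R -> R) y,
    / e ^ 2 * (F (y + 2 * e) - 2 * F (y + e) + F y) = sdq F e y)
    by (intros; unfold sdq, Rdiv; ring).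
  rewrite <- E. apply (is_derive_ext _ _ x _ (E G)).
  apply is_derive_mulc, is_derive_add; [apply is_derive_sub|].
  - apply is_derive_shift, Hd.
  - apply is_derive_mulc, is_derive_shift, Hd.
  - apply Hd.
Qed.

Lemma continuity_sdq (g : R -> R) e x : (forall y, continuity_pt g y) ->
  continuity_pt (sdq g e) x.
Proof.
  intros Hc. apply (continuity_pt_ext
    (fun y => / e ^ 2 * (1 * (1 * g (y + 2 * e) + (-2) * g (y + e)) + 1 * g y) + 0 * g y));
    [intro y; unfold sdq, Rdiv; ring|].
  apply continuity_lin; [|apply Hc].
  apply continuity_lin; [|apply Hc]. apply continuity_lin; apply continuity_shift, Hc.
Qed.

Lemma is_derive_of_deriv_on (D : R -> Prop) (g g' : R -> R) x :
  (exists r, 0 < r /\ forall y, Rabs (y - x) < r -> D y) ->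
  deriv_on D g g' -> D x -> is_derive g x (g' x).
Proof.
  intros [r [Hr HD]] Hd Dx. apply is_derive_Reals. intros eps Heps.
  destruct (Hd x Dx eps Heps) as [alp [Halp H]].
  assert (Hm : 0 < Rmin alp r) by (apply Rmin_pos; lra).
  exists (mkposreal _ Hm). intros h Hh Hhd. simpl in Hhd.
  assert (H1 := H (x + h)). simpl in H1. unfold R_dist in H1.
  replace (x + h - x) with h in H1 by ring.
  apply H1. repeat split.
  - apply HD. replace (x + h - x) with h by ring.
    eapply Rlt_le_trans; [exact Hhd | apply Rmin_r].
  - lra.
  - eapply Rlt_le_trans; [exact Hhd | apply Rmin_l].
Qed.

Lemma continuity_of_cont_on (D : R -> Prop) (g : R -> R) x :
  (exists r, 0 < r /\ forall y, Rabs (y - x) < r -> D y) ->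
  cont_on D g -> D x -> continuity_pt g x.
Proof.
  intros [r [Hr HD]] Hc Dx eps Heps. destruct (Hc x Dx eps Heps) as [alp [Halp H]].
  exists (Rmin alp r). split; [apply Rmin_pos; lra|]. intros y [_ Hy].
  simpl in Hy; unfold R_dist in Hy. apply H. split.
  - apply HD. eapply Rlt_le_trans; [exact Hy | apply Rmin_r].
  - simpl; unfold R_dist. eapply Rlt_le_trans; [exact Hy | apply Rmin_l].
Qed.

Lemma Ioi_nbhd c x : c < x -> exists r, 0 < r /\ forall y, Rabs (y - x) < r -> Ioi c y.
Proof.
  intros H. exists (x - c). split; [lra|]. intros y Hy. unfold Ioi.
  apply Rabs_def2 in Hy. lra.
Qed.

Lemma deriv_on_of_is_derive (D : R -> Prop) (g g' : R -> R) :
  (forall x, D x -> is_derive g x (g' x)) -> deriv_on D g g'.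
Proof.
  intros Hd x Dx eps Heps.
  destruct (proj1 (is_derive_Reals _ _ _) (Hd x Dx) eps Heps) as [del H].
  exists del. split; [apply cond_pos|]. intros y [[Dy Hyx] Hd2].
  simpl in Hd2 |- *. unfold R_dist in Hd2 |- *.
  assert (E : forall a b : R, a + (b - a) = b) by (intros; ring).
  assert (H1 := H (y - x)). rewrite E in H1.
  apply H1; [lra | exact Hd2].
Qed.

Lemma cont_on_of_continuity (D : R -> Prop) (g : R -> R) :
  (forall x, D x -> continuity_pt g x) -> cont_on D g.
Proof.
  intros Hc x Dx eps Heps. destruct (Hc x Dx eps Heps) as [alp [Halp H]].
  exists alp. split; [exact Halp|]. intros y [Dy Hy].
  destruct (Req_dec y x) as [->|Hne].
  - simpl; unfold R_dist; rewrite Rminus_diag, Rabs_R0; lra.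
  - apply H. repeat split; auto.
Qed.

Definition ext0 (g : R -> R) (x : R) : R := g (Rmax 0 x).

Lemma ext0_pos (g : R -> R) x : 0 <= x -> ext0 g x = g x.
Proof. intro. unfold ext0. now rewrite Rmax_right. Qed.

Lemma continuity_ext0 (g : R -> R) : cont_on Ici0 g -> forall x, continuity_pt (ext0 g) x.
Proof.
  intros Hc x eps Heps.
  assert (Dx : Ici0 (Rmax 0 x)) by (unfold Ici0; apply Rmax_l).
  destruct (Hc _ Dx eps Heps) as [alp [Halp H]].
  exists alp. split; [exact Halp|]. intros y [_ Hy]. simpl in Hy |- *. unfold R_dist in Hy |- *.
  apply H. split; [unfold Ici0; apply Rmax_l|]. simpl; unfold R_dist.
  eapply Rle_lt_trans; [|exact Hy].
  unfold Rmax. destruct (Rle_dec 0 y); destruct (Rle_dec 0 x);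
    unfold Rabs; repeat destruct Rcase_abs; lra.
Qed.

(** Since [g1 0 = 0], the right derivative at [0] glues with the zero derivative on the left. *)
Lemma is_derive_ext0 (g g1 : R -> R) : deriv_on Ici0 g g1 -> g1 0 = 0 ->
  forall x, is_derive (ext0 g) x (ext0 g1 x).
Proof.
  intros Hd H0 x. destruct (Rlt_le_dec 0 x) as [Hx|Hx].
  - rewrite ext0_pos by lra. apply (is_derive_local g).
    + exists x. split; [lra|]. intros t Ht. apply Rabs_def2 in Ht.
      rewrite ext0_pos by lra. reflexivity.
    + apply (is_derive_of_deriv_on Ici0); [| exact Hd | unfold Ici0; lra].
      exists x. split; [lra|]. intros y Hy. apply Rabs_def2 in Hy. unfold Ici0; lra.
  - destruct (Rlt_le_dec x 0) as [Hx2|Hx2].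
    + unfold ext0 at 2. rewrite Rmax_left, H0 by lra. apply (is_derive_local (fun _ => g 0)).
      * exists (- x). split; [lra|]. intros t Ht. apply Rabs_def2 in Ht.
        unfold ext0. rewrite Rmax_left by lra. reflexivity.
      * apply is_derive_cst.
    + assert (x = 0) by lra. subst x. unfold ext0 at 2. rewrite Rmax_left, H0 by lra.
      apply is_derive_Reals. intros eps Heps.
      destruct (Hd 0 (Rle_refl 0) eps Heps) as [alp [Halp H]].
      exists (mkposreal _ Halp). intros h Hh Hhd. simpl in Hhd.
      unfold ext0. rewrite Rplus_0_l, (Rmax_left 0 0) by lra.
      destruct (Rlt_le_dec 0 h) as [Hxh|Hxh].
      * rewrite (Rmax_right 0 h) by lra.
        assert (H1 := H h). simpl in H1. unfold R_dist in H1. rewrite H0 in H1.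
        replace (h - 0) with h in H1 by ring. apply H1. repeat split; [unfold Ici0|..]; lra.
      * rewrite (Rmax_left 0 h) by lra.
        replace ((g 0 - g 0) / h - 0) with 0 by (field; auto). rewrite Rabs_R0; lra.
Qed.

Definition unif_approx (P : R -> Prop) (u : nat -> R -> R) (v : R -> R) : Prop :=
  forall g, 0 < g -> exists N, forall n x, (N <= n)%nat -> P x -> Rabs (u n x - v x) <= g.

Lemma unif_cv_on_of_approx P u v : unif_approx P u v -> unif_cv_on P u v.
Proof.
  intros H eps He. destruct (H (eps / 2)) as [N HN]; [lra|].
  exists N. intros n x Hn Px. pose proof (HN n x Hn Px). lra.
Qed.

Lemma unif_approx_sub (P Q : R -> Prop) u v :
  (forall x, Q x -> P x) -> unif_approx P u v -> unif_approx Q u v.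
Proof. intros HQ H g Hg. destruct (H g Hg) as [N HN]. exists N. auto. Qed.

Lemma unif_approx_ext P u v w :
  (forall x, P x -> v x = w x) -> unif_approx P u v -> unif_approx P u w.
Proof.
  intros E H g Hg. destruct (H g Hg) as [N HN]. exists N. intros n x Hn Px.
  rewrite <- E; auto.
Qed.

Lemma compact_away (K : R -> Prop) c : compact K -> (forall x, K x -> x <> c) ->
  exists eta, 0 < eta /\ forall x, K x -> Rabs (x - c) >= eta.
Proof.
  intros HK Hc. destruct (compact_P2 K HK c) as [del Hdel].
  { intro Kc. exact (Hc c Kc eq_refl). }
  exists del. split; [apply cond_pos|]. intros x Kx. apply Rnot_lt_ge. intro Hlt.
  exact (Hdel x Hlt Kx).
Qed.

Lemma ucc_Ici0 u v : (forall b, unif_approx (fun x => 0 <= x <= b) u v) ->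
  unif_cv_compacts Ici0 u v.
Proof.
  intros H K HK HD. destruct (compact_P1 K HK) as [m [M HmM]].
  apply unif_cv_on_of_approx, (unif_approx_sub (fun x => 0 <= x <= M)), H.
  intros x Kx. split; [apply HD | apply HmM]; auto.
Qed.

Lemma ucc_Ioi c u v : (forall a b, c < a -> unif_approx (fun x => a <= x <= b) u v) ->
  unif_cv_compacts (Ioi c) u v.
Proof.
  intros H K HK HD. destruct (compact_P1 K HK) as [m [M HmM]].
  destruct (compact_away K c HK) as [eta [He Heta]].
  { intros x Kx E. pose proof (HD x Kx). unfold Ioi in *. lra. }
  apply unif_cv_on_of_approx, (unif_approx_sub (fun x => c + eta <= x <= M)), H; [|lra].
  intros x Kx. pose proof (Heta x Kx). pose proof (HD x Kx). pose proof (HmM x Kx).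
  unfold Ioi in *. rewrite Rabs_right in * by lra. lra.
Qed.

Lemma ucc_Ico0 c u v : (forall b, b < c -> unif_approx (fun x => 0 <= x <= b) u v) ->
  unif_cv_compacts (fun x => 0 <= x < c) u v.
Proof.
  intros H K HK HD. destruct (compact_away K c HK) as [eta [He Heta]].
  { intros x Kx E. pose proof (HD x Kx). lra. }
  apply unif_cv_on_of_approx, (unif_approx_sub (fun x => 0 <= x <= c - eta)), H; [|lra].
  intros x Kx. pose proof (Heta x Kx). pose proof (HD x Kx).
  rewrite Rabs_left in * by lra. lra.
Qed.

Lemma uniform_continuity (g : R -> R) a b : (forall x, a <= x <= b -> continuity_pt g x) ->
  forall eps, 0 < eps -> exists del, 0 < del /\ forall x y, a <= x <= b -> a <= y <= b ->
    Rabs (x - y) < del -> Rabs (g x - g y) < eps.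
Proof.
  intros Hc eps He.
  destruct (Heine g (fun c => a <= c <= b) (compact_P3 a b) Hc (mkposreal _ He)) as [del H].
  exists del. split; [apply cond_pos | auto].
Qed.

Lemma unif_approx_of_shifted (u : nat -> R -> R) (G : R -> R) a b :
  (forall x, a <= x <= b + 1 -> continuity_pt G x) ->
  (forall g, 0 < g -> exists N, forall n x, (N <= n)%nat -> a <= x <= b ->
     exists z, x <= z <= x + g /\ Rabs (u n x - G z) <= g) ->
  unif_approx (fun x => a <= x <= b) u G.
Proof.
  intros Hc H g Hg.
  destruct (uniform_continuity G a (b + 1) Hc (g / 2)) as [del [Hdel Hu]]; [lra|].
  set (g' := Rmin (Rmin (del / 2) (g / 2)) 1).
  assert (Hg' : 0 < g' /\ g' <= del / 2 /\ g' <= g / 2 /\ g' <= 1).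
  { unfold g'. pose proof (Rmin_l (Rmin (del / 2) (g / 2)) 1).
    pose proof (Rmin_r (Rmin (del / 2) (g / 2)) 1).
    pose proof (Rmin_l (del / 2) (g / 2)). pose proof (Rmin_r (del / 2) (g / 2)).
    repeat split; try lra. repeat apply Rmin_pos; lra. }
  destruct (H g' ltac:(lra)) as [N HN]. exists N. intros n x Hn Hx.
  destruct (HN n x Hn Hx) as [z [Hz Hclose]].
  assert (Rabs (G z - G x) < g / 2) by (apply Hu; try rewrite Rabs_right; lra).
  replace (u n x - G x) with ((u n x - G z) + (G z - G x)) by ring.
  eapply Rle_trans; [apply Rabs_triang | lra].
Qed.

Lemma unif_approx_scale P (w : R -> R) u v W :
  (forall x, P x -> Rabs (w x) <= W) -> unif_approx P u v ->
  unif_approx P (fun n x => w x * u n x) (fun x => w x * v x).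
Proof.
  intros Hw H g Hg. destruct (H (g / (Rabs W + 1))) as [N HN].
  { apply Rdiv_lt_0_compat; [lra|]. pose proof (Rabs_pos W). lra. }
  exists N. intros n x Hn Px. pose proof (HN n x Hn Px). pose proof (Hw x Px).
  pose proof (Rle_abs W). pose proof (Rabs_pos (u n x - v x)).
  rewrite <- Rmult_minus_distr_l, Rabs_mult.
  apply Rle_trans with (Rabs W * (g / (Rabs W + 1))).
  - apply Rmult_le_compat; try lra; apply Rabs_pos.
  - apply Rmult_le_reg_r with (Rabs W + 1); [pose proof (Rabs_pos W); lra|].
    pose proof (Rabs_pos W).
    replace (Rabs W * (g / (Rabs W + 1)) * (Rabs W + 1)) with (Rabs W * g) by (field; lra).
    nra.
Qed.

Lemma quotient_estimate a a0 b b0 m M d : 0 < m -> m <= b0 -> Rabs a0 <= M ->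
  Rabs (a - a0) <= d -> Rabs (b - b0) <= d -> d <= m / 2 ->
  Rabs (a / b - a0 / b0) <= d * (2 / m + 2 * M / m ^ 2).
Proof.
  intros Hm Hb0 Ha0 Ha Hb Hd.
  assert (Hb1 : m / 2 <= b) by (apply Rabs_le_between' in Hb; lra).
  assert (0 <= d) by (pose proof (Rabs_pos (a - a0)); lra).
  replace (a / b - a0 / b0) with ((a - a0) / b + a0 * (b0 - b) / (b * b0)) by (field; lra).
  eapply Rle_trans; [apply Rabs_triang|].
  unfold Rdiv. rewrite !Rabs_mult, !Rabs_inv, (Rabs_right b), (Rabs_right (b * b0)) by nra.
  rewrite Rabs_minus_sym in Hb.
  assert (/ b <= 2 / m).
  { replace (2 / m) with (/ (m / 2)) by (field; lra). apply Rinv_le_contravar; lra. }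
  assert (/ (b * b0) <= 2 / m ^ 2).
  { replace (2 / m ^ 2) with (/ (m / 2 * m)) by (field; lra).
    apply Rinv_le_contravar; [nra | apply Rmult_le_compat; lra]. }
  assert (0 < / b) by (apply Rinv_0_lt_compat; lra).
  assert (0 < / (b * b0)) by (apply Rinv_0_lt_compat; nra).
  pose proof (Rabs_pos a0). pose proof (Rabs_pos (a - a0)). pose proof (Rabs_pos (b0 - b)).
  assert (Rabs (a - a0) * / b <= d * (2 / m)) by (apply Rmult_le_compat; lra).
  assert (Rabs a0 * Rabs (b0 - b) * / (b * b0) <= M * d * (2 / m ^ 2))
    by (apply Rmult_le_compat; [nra | lra | apply Rmult_le_compat |]; lra).
  unfold Rdiv in *. nra.
Qed.

Lemma unif_approx_div P un u vn v m M : 0 < m ->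
  (forall x, P x -> m <= v x) -> (forall x, P x -> Rabs (u x) <= M) ->
  unif_approx P un u -> unif_approx P vn v ->
  unif_approx P (fun n x => un n x / vn n x) (fun x => u x / v x).
Proof.
  intros Hm Hv Hu Hun Hvn g Hg.
  set (C := 2 / m + 2 * Rabs M / m ^ 2).
  assert (HC : 0 <= C).
  { unfold C. pose proof (Rabs_pos M).
    apply Rplus_le_le_0_compat; apply Rdiv_le_0_compat; try apply pow_lt; nra. }
  set (d := Rmin (m / 2) (g / (C + 1))).
  assert (Hd : 0 < d) by (apply Rmin_pos; [lra | apply Rdiv_lt_0_compat; lra]).
  destruct (Hun d Hd) as [N1 HN1]. destruct (Hvn d Hd) as [N2 HN2].
  exists (max N1 N2). intros n x Hn Px.
  eapply Rle_trans; [apply (quotient_estimate _ _ _ _ m (Rabs M) d); auto|].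
  - pose proof (Hu x Px). pose proof (Rle_abs M). lra.
  - apply HN1; auto; lia.
  - apply HN2; auto; lia.
  - apply Rmin_l.
  - fold C. assert (d <= g / (C + 1)) by apply Rmin_r.
    apply Rle_trans with (g / (C + 1) * C); [apply Rmult_le_compat_r; lra|].
    apply Rmult_le_reg_r with (C + 1); [lra|].
    replace (g / (C + 1) * C * (C + 1)) with (g * C) by (field; lra). nra.
Qed.

(** ** The correction term [p_n = q^(n+2) / (n+1)^2], [q s = s^2/(1+s^2)] *)

(** [q] and its first two derivatives [q1], [q2]: [q] is flat at [0] and bounded by [1]. *)
Definition q (s : R) : R := s ^ 2 / (1 + s ^ 2).
Definition q1 (s : R) : R := 2 * s / (1 + s ^ 2) ^ 2.
Definition q2 (s : R) : R := (2 - 6 * s ^ 2) / (1 + s ^ 2) ^ 3.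

Lemma is_derive_q s : is_derive q s (q1 s).
Proof. unfold q, q1. auto_derive; [nra | field; nra]. Qed.

Lemma is_derive_q1 s : is_derive q1 s (q2 s).
Proof. unfold q1, q2. auto_derive; [nra | field; nra]. Qed.

Lemma q_bounds s : 0 <= q s <= 1.
Proof.
  unfold q. assert (0 < 1 + s ^ 2) by nra. split; [apply Rdiv_le_0_compat; nra|].
  apply Rmult_le_reg_r with (1 + s ^ 2); [lra|]. field_simplify; nra.
Qed.

Lemma q_le_sq s : q s <= s ^ 2.
Proof.
  unfold q. assert (0 < 1 + s ^ 2) by nra.
  apply Rmult_le_reg_r with (1 + s ^ 2); [lra|]. field_simplify; nra.
Qed.

Lemma q_pos s : 0 < s -> 0 < q s.
Proof. intro Hs. unfold q. apply Rdiv_lt_0_compat; nra. Qed.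

Lemma q1_bounds s : 0 <= s -> 0 <= q1 s <= 1.
Proof.
  intro Hs. unfold q1. assert (0 < (1 + s ^ 2) ^ 2) by nra.
  split; [apply Rdiv_le_0_compat; nra|].
  apply Rmult_le_reg_r with ((1 + s ^ 2) ^ 2); [lra|]. field_simplify; nra.
Qed.

Lemma q1_pos s : 0 < s -> 0 < q1 s.
Proof. intro Hs. unfold q1. apply Rdiv_lt_0_compat; nra. Qed.

(** [s q1 s = O(s^2)]: this controls [(s p1 - p)/s^4]. *)
Lemma s_q1_le s : 0 <= s -> 0 <= s * q1 s <= 2 * s ^ 2.
Proof.
  intro Hs. unfold q1. assert (0 < 1 + s ^ 2) by nra. assert (1 <= (1 + s ^ 2) ^ 2) by nra.
  replace (s * (2 * s / (1 + s ^ 2) ^ 2)) with (2 * s ^ 2 / (1 + s ^ 2) ^ 2) by (field; lra).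
  split; [apply Rdiv_le_0_compat; nra|].
  apply Rmult_le_reg_r with ((1 + s ^ 2) ^ 2); [nra|]. field_simplify; nra.
Qed.

Lemma pow_le_self x k : 0 <= x <= 1 -> x ^ S k <= x.
Proof.
  intros H. induction k as [|k IH]; simpl in *; [lra|].
  pose proof (pow_le x k (proj1 H)). nra.
Qed.

Definition dn (n : nat) : R := / (INR n + 1) ^ 2.
Definition p (n : nat) (s : R) : R := dn n * q s ^ (n + 2).
Definition p1 (n : nat) (s : R) : R := dn n * INR (n + 2) * q s ^ (n + 1) * q1 s.
Definition p2 (n : nat) (s : R) : R :=
  dn n * INR (n + 2) * (INR (n + 1) * q s ^ n * q1 s ^ 2 + q s ^ (n + 1) * q2 s).

(** [kn n] bounds [p n], [p1 n] and [(s p1 n - p n)/s^4]; it tends to [0]. *)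
Definition kn (n : nat) : R := dn n * (2 * INR (n + 2) + 1).

Lemma dn_pos n : 0 < dn n.
Proof. unfold dn. apply Rinv_0_lt_compat. pose proof (pos_INR n). nra. Qed.

Lemma dn_le_kn n : dn n <= kn n /\ dn n * INR (n + 2) <= kn n.
Proof. unfold kn. pose proof (dn_pos n). pose proof (pos_INR (n + 2)). split; nra. Qed.

Lemma is_derive_p n s : is_derive (p n) s (p1 n s).
Proof.
  replace (p1 n s) with (dn n * (INR (n + 2) * q1 s * q s ^ Init.Nat.pred (n + 2)))
    by (unfold p1; replace (Init.Nat.pred (n + 2)) with (n + 1)%nat by lia; ring).
  apply is_derive_mulc, is_derive_pow, is_derive_q.
Qed.

Lemma is_derive_p1 n s : is_derive (p1 n) s (p2 n s).
Proof.
  assert (E : forall t, dn n * INR (n + 2) * (q t ^ (n + 1) * q1 t) = p1 n t)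
    by (intro; unfold p1; ring).
  apply (is_derive_ext _ _ s _ E).
  replace (p2 n s) with (dn n * INR (n + 2) *
    ((INR (n + 1) * q1 s * q s ^ Init.Nat.pred (n + 1)) * q1 s + q s ^ (n + 1) * q2 s))
    by (unfold p2; replace (Init.Nat.pred (n + 1)) with n by lia; ring).
  apply is_derive_mulc.
  apply (is_derive_mult (K:=R_AbsRing) (fun s => q s ^ (n + 1)) q1);
    [apply is_derive_pow, is_derive_q | apply is_derive_q1 | intros; apply Rmult_comm].
Qed.

Lemma continuity_p2 n s : continuity_pt (p2 n) s.
Proof.
  apply continuity_pt_filterlim, (ex_derive_continuous (K:=R_AbsRing) (V:=R_NormedModule)).
  unfold p2, q, q1, q2. auto_derive. repeat split; nra.
Qed.

Lemma p_at_0 n : p n 0 = 0.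
Proof. unfold p, q. replace (0 ^ 2 / (1 + 0 ^ 2)) with 0 by field. rewrite pow_i by lia. ring. Qed.

Lemma p_bounds n s : 0 <= p n s <= dn n /\ p n s <= dn n * s ^ 2.
Proof.
  unfold p. pose proof (dn_pos n). pose proof (q_bounds s). pose proof (q_le_sq s).
  replace (n + 2)%nat with (S (n + 1)) by lia.
  pose proof (pow_le _ (S (n + 1)) (proj1 (q_bounds s))).
  pose proof (pow_le_self _ (n + 1) (q_bounds s)). repeat split; nra.
Qed.

Lemma p1_bounds n s : 0 <= s -> 0 <= p1 n s <= dn n * INR (n + 2).
Proof.
  intro Hs. unfold p1. pose proof (dn_pos n). pose proof (pos_INR (n + 2)).
  pose proof (q1_bounds s Hs). pose proof (q_bounds s).
  pose proof (pow_le _ (n + 1) (proj1 (q_bounds s))).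
  replace (n + 1)%nat with (S n) in * by lia. pose proof (pow_le_self _ n (q_bounds s)).
  assert (0 <= q s ^ S n * q1 s <= 1) by (split; nra).
  replace (dn n * INR (n + 2) * q s ^ S n * q1 s) with
    (dn n * INR (n + 2) * (q s ^ S n * q1 s)) by ring.
  assert (0 <= dn n * INR (n + 2)) by (apply Rmult_le_pos; lra).
  split; [apply Rmult_le_pos; lra | nra].
Qed.

Lemma p1_pos n s : 0 < s -> 0 < p1 n s.
Proof.
  intro Hs. unfold p1. pose proof (dn_pos n). assert (0 < INR (n + 2)) by (apply lt_0_INR; lia).
  pose proof (pow_lt _ (n + 1) (q_pos s Hs)). pose proof (q1_pos s Hs).
  apply Rmult_lt_0_compat; [apply Rmult_lt_0_compat; [apply Rmult_lt_0_compat|]|]; assumption.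
Qed.

Lemma p_decreasing n s : p (S n) s <= p n s.
Proof.
  unfold p, dn. rewrite S_INR. pose proof (pos_INR n).
  assert (/ (INR n + 1 + 1) ^ 2 <= / (INR n + 1) ^ 2) by (apply Rinv_le_contravar; nra).
  assert (0 < / (INR n + 1 + 1) ^ 2) by (apply Rinv_0_lt_compat; nra).
  pose proof (pow_le _ (n + 2) (proj1 (q_bounds s))).
  replace (S n + 2)%nat with (S (n + 2)) by lia.
  pose proof (pow_le_self _ (n + 1) (q_bounds s)).
  assert (q s ^ S (n + 2) <= q s ^ (n + 2))
    by (simpl; pose proof (q_bounds s); nra).
  nra.
Qed.

Lemma p_p1_ratio n s : p n s * (2 * INR (n + 2)) = p1 n s * s * (1 + s ^ 2).
Proof.
  unfold p, p1. replace (n + 2)%nat with (S (n + 1)) at 1 by lia. simpl pow at 1.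
  unfold q1. unfold q at 1. assert (0 < 1 + s ^ 2) by nra. field. lra.
Qed.

Lemma p_third_order n s : 0 <= s -> Rabs (s * p1 n s - p n s) <= kn n * s ^ 4.
Proof.
  intro Hs. unfold kn, p, p1.
  replace (n + 2)%nat with (S (n + 1)) at 2 by lia. simpl pow at 2.
  pose proof (dn_pos n). pose proof (pos_INR (n + 2)).
  set (m := INR (n + 2)) in *.
  replace (s * (dn n * m * q s ^ (n + 1) * q1 s) - dn n * (q s * q s ^ (n + 1)))
    with (dn n * q s ^ (n + 1) * (m * (s * q1 s) - q s)) by ring.
  pose proof (q_bounds s). pose proof (q_le_sq s). pose proof (s_q1_le s Hs).
  replace (n + 1)%nat with (S n) by lia.
  pose proof (pow_le _ (S n) (proj1 (q_bounds s))). pose proof (pow_le_self _ n (q_bounds s)).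
  rewrite Rabs_mult, (Rabs_right (dn n * q s ^ S n)) by nra.
  assert (Rabs (m * (s * q1 s) - q s) <= (2 * m + 1) * s ^ 2)
    by (unfold Rabs; destruct Rcase_abs; nra).
  pose proof (Rabs_pos (m * (s * q1 s) - q s)).
  replace (dn n * (2 * m + 1) * s ^ 4) with ((dn n * s ^ 2) * ((2 * m + 1) * s ^ 2)) by ring.
  apply Rmult_le_compat; nra.
Qed.

Definition Pn (n : nat) (x : R) : R := RInt (p n) 0 x.

Lemma is_derive_Pn n x : is_derive (Pn n) x (p n x).
Proof. apply is_derive_RInt0. intro y. exact (continuity_of_is_derive _ _ _ (is_derive_p n y)). Qed.

Definition en (sigma : R) (n : nat) : R := sigma / 2 ^ (n + 2).

Lemma en_pos sigma n : 0 < sigma -> 0 < en sigma n.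
Proof. intro. unfold en. apply Rdiv_lt_0_compat; [lra | apply pow_lt; lra]. Qed.

Lemma en_S sigma n : en sigma n = 2 * en sigma (S n).
Proof.
  unfold en. replace (S n + 2)%nat with (S (n + 2)) by lia. simpl pow.
  assert (0 < 2 ^ (n + 2)) by (apply pow_lt; lra). field. lra.
Qed.

Lemma pow2_ge n : INR n + 1 <= 2 ^ n.
Proof. induction n; [simpl; lra|]. rewrite S_INR. simpl pow. pose proof (pos_INR n). lra. Qed.

Lemma en_le sigma n : 0 < sigma -> en sigma n <= sigma / 4 /\ en sigma n <= sigma / (INR n + 1).
Proof.
  intro. unfold en. rewrite pow_add. simpl pow. pose proof (pow2_ge n). pose proof (pos_INR n).
  split; apply Rmult_le_compat_l; try lra; apply Rinv_le_contravar; nra.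
Qed.

Lemma parameters_small sigma : 0 < sigma -> forall g, 0 < g -> exists N, forall n, (N <= n)%nat ->
  en sigma n <= g /\ kn n <= g /\ / INR (n + 2) <= g.
Proof.
  intros Hs g Hg. destruct (INR_unbounded ((sigma + 5) / g)) as [N HN].
  exists N. intros n Hn. apply le_INR in Hn. pose proof (pos_INR N). pose proof (pos_INR n).
  assert (Hc : (sigma + 5) / (INR n + 1) <= g).
  { apply Rmult_le_reg_r with (INR n + 1); [lra|].
    replace ((sigma + 5) / (INR n + 1) * (INR n + 1)) with (sigma + 5) by (field; lra).
    apply Rmult_le_reg_r with (/ g); [apply Rinv_0_lt_compat; lra|].
    replace (g * (INR n + 1) * / g) with (INR n + 1) by (field; lra). unfold Rdiv in HN. lra. }
  assert (E2 : INR (n + 2) = INR n + 2) by (rewrite plus_INR; simpl; ring).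
  unfold kn, dn. rewrite E2. repeat split; eapply Rle_trans; try exact Hc.
  - apply Rle_trans with (sigma / (INR n + 1)); [apply (proj2 (en_le sigma n Hs))|].
    unfold Rdiv. apply Rmult_le_compat_r; [apply Rlt_le, Rinv_0_lt_compat|]; lra.
  - apply Rmult_le_reg_r with ((INR n + 1) ^ 2); [nra|].
    replace (/ (INR n + 1) ^ 2 * (2 * (INR n + 2) + 1) * (INR n + 1) ^ 2)
      with (2 * INR n + 5) by (field; lra).
    replace ((sigma + 5) / (INR n + 1) * (INR n + 1) ^ 2) with ((sigma + 5) * (INR n + 1))
      by (field; lra). nra.
  - apply Rmult_le_reg_r with ((INR n + 2) * (INR n + 1)); [nra|].
    replace (/ (INR n + 2) * ((INR n + 2) * (INR n + 1))) with (INR n + 1) by (field; lra).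
    replace ((sigma + 5) / (INR n + 1) * ((INR n + 2) * (INR n + 1)))
      with ((sigma + 5) * (INR n + 2)) by (field; lra). nra.
Qed.

(** ** The approximants *)

Definition primf (f : R -> R) (x : R) : R := RInt (ext0 f) 0 x.
Definition primf2 (f : R -> R) (x : R) : R := RInt (primf f) 0 x.

Definition approx (sigma : R) (f : R -> R) (n : nat) (s : R) : R :=
  sdq (primf2 f) (en sigma n) s - sdq (primf2 f) (en sigma n) 0 + Pn n s.
Definition approx1 (sigma : R) (f : R -> R) (n : nat) (s : R) : R :=
  sdq (primf f) (en sigma n) s + p n s.
Definition approx2 (sigma : R) (f : R -> R) (n : nat) (s : R) : R :=
  sdq (ext0 f) (en sigma n) s + p1 n s.
Definition approx3 (sigma : R) (f1 : R -> R) (n : nat) (s : R) : R :=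
  sdq (ext0 f1) (en sigma n) s + p2 n s.

Lemma approx_at_0 sigma f n : approx sigma f n 0 = 0.
Proof.
  assert (E : RInt (p n) 0 0 = 0) by exact (RInt_point _ _).
  unfold approx, Pn. rewrite E. ring.
Qed.

Section StandingAssumptions.

Context {sigma : R} {f f1 f2 f3 : R -> R}.
Hypothesis HA : assumptions_A sigma f f1 f2 f3.

Lemma sigma_pos : 0 < sigma.
Proof. apply HA. Qed.

Lemma f2_pos x : sigma < x -> 0 < f2 x.
Proof. destruct HA as (_ & _ & _ & _ & _ & _ & _ & _ & _ & _ & _ & H). apply H. Qed.

Lemma is_derive_ext0_f x : is_derive (ext0 f) x (ext0 f1 x).
Proof.
  destruct HA as (Hs & _ & _ & Hd & _ & _ & _ & _ & _ & _ & Hz & _).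
  apply (is_derive_ext0 f f1 Hd). apply Hz; lra.
Qed.

Lemma continuity_ext0_f1 x : continuity_pt (ext0 f1) x.
Proof. apply continuity_ext0, HA. Qed.

Lemma is_derive_f2 x : sigma < x -> is_derive f2 x (f3 x).
Proof.
  destruct HA as (_ & _ & _ & _ & _ & _ & Hd3 & _). intro Hx.
  apply (is_derive_of_deriv_on (Ioi sigma)); auto. now apply Ioi_nbhd.
Qed.

Lemma continuity_f2 x : sigma < x -> continuity_pt f2 x.
Proof. intro Hx. exact (continuity_of_is_derive _ _ _ (is_derive_f2 x Hx)). Qed.

(** Near [x > 0], [ext0 f1] coincides with [f1], so it inherits the derivatives of [f1]
    relative to any neighbourhood [D] of [x]; e.g. [f''] right of [sigma]. *)
Lemma is_derive_ext0_f1 (D : R -> Prop) (g2 : R -> R) x : 0 < x ->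
  (exists r, 0 < r /\ forall y, Rabs (y - x) < r -> D y) ->
  deriv_on D f1 g2 -> D x -> is_derive (ext0 f1) x (g2 x).
Proof.
  intros Hx HD Hd Dx. apply (is_derive_local f1).
  - exists x. split; [lra|]. intros t Ht. apply Rabs_def2 in Ht. now rewrite ext0_pos by lra.
  - now apply (is_derive_of_deriv_on D).
Qed.

Lemma is_derive_ext0_f1_f2 x : sigma < x -> is_derive (ext0 f1) x (f2 x).
Proof.
  intro Hx. pose proof sigma_pos.
  apply (is_derive_ext0_f1 (Ioi sigma)); [lra | now apply Ioi_nbhd | apply HA | exact Hx].
Qed.

Lemma ext0_f1_zero x : x <= sigma -> ext0 f1 x = 0.
Proof.
  pose proof sigma_pos. destruct HA as (_ & _ & _ & _ & _ & _ & _ & _ & _ & _ & Hz & _).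
  intro Hx. unfold ext0. apply Hz. split; [apply Rmax_l | apply Rmax_lub; lra].
Qed.

Lemma ext0_f_at_0 : ext0 f 0 = 0.
Proof. rewrite ext0_pos by lra. apply HA. Qed.

Lemma ext0_f_zero x : x <= sigma -> ext0 f x = 0.
Proof.
  intro Hx. destruct (Rle_dec x 0) as [Hx0|Hx0].
  - pose proof ext0_f_at_0 as E. unfold ext0 in *. now rewrite Rmax_left in * by lra.
  - destruct (mvt_closed (ext0 f) (ext0 f1) 0 x) as [c [Hc E]];
      [lra | intros; apply is_derive_ext0_f |].
    rewrite ext0_f1_zero, ext0_f_at_0 in E by lra. lra.
Qed.

Lemma ext0_f1_increasing x y : sigma <= x -> x < y -> ext0 f1 x < ext0 f1 y.
Proof.
  intros Hx Hxy.
  destruct (mvt_open (ext0 f1) (fun u => if Rlt_dec sigma u then f2 u else 1) x y)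
    as [c [Hc E]]; [lra | | intros; apply continuity_ext0_f1 |].
  - intros u Hu. destruct (Rlt_dec sigma u); [apply is_derive_ext0_f1_f2; auto | lra].
  - destruct (Rlt_dec sigma c); [pose proof (f2_pos c r)|]; nra.
Qed.

Lemma ext0_f1_nondecr x y : x <= y -> ext0 f1 x <= ext0 f1 y.
Proof.
  intros Hxy. destruct (Rle_dec y sigma).
  - rewrite !ext0_f1_zero by lra. lra.
  - destruct (Rle_dec x sigma).
    + rewrite (ext0_f1_zero x), <- (ext0_f1_zero sigma) by lra.
      apply Rlt_le, ext0_f1_increasing; lra.
    + destruct (Req_dec x y) as [->|]; [lra|]. apply Rlt_le, ext0_f1_increasing; lra.
Qed.

Lemma ext0_f1_nonneg x : 0 <= ext0 f1 x.
Proof.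
  pose proof sigma_pos. rewrite <- (ext0_f1_zero (Rmin x 0)) by (pose proof (Rmin_r x 0); lra).
  apply ext0_f1_nondecr, Rmin_l.
Qed.

Lemma a_fun_eq u : sigma < u -> f1 u = u * a_fun sigma f1 f2 u * f2 u.
Proof.
  intros Hu. pose proof (f2_pos u Hu). pose proof sigma_pos.
  unfold a_fun. destruct (Rlt_dec sigma u); [|lra]. field. split; lra.
Qed.

Lemma a_fun_nonneg u : 0 <= a_fun sigma f1 f2 u.
Proof.
  unfold a_fun. destruct (Rlt_dec sigma u); [|lra].
  pose proof (f2_pos u r). pose proof sigma_pos.
  pose proof (ext0_f1_nonneg u). rewrite ext0_pos in * by lra.
  apply Rdiv_le_0_compat; nra.
Qed.


Lemma is_derive_primf x : is_derive (primf f) x (ext0 f x).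
Proof.
  apply is_derive_RInt0. intro y. exact (continuity_of_is_derive _ _ _ (is_derive_ext0_f y)).
Qed.

Lemma is_derive_primf2 x : is_derive (primf2 f) x (primf f x).
Proof.
  apply is_derive_RInt0. intro y. exact (continuity_of_is_derive _ _ _ (is_derive_primf y)).
Qed.

Lemma is_derive_approx n x : is_derive (approx sigma f n) x (approx1 sigma f n x).
Proof.
  replace (approx1 sigma f n x) with (sdq (primf f) (en sigma n) x - 0 + p n x)
    by (unfold approx1; ring).
  apply is_derive_add; [apply is_derive_sub|].
  - apply is_derive_sdq, is_derive_primf2.
  - apply is_derive_cst.
  - apply is_derive_Pn.
Qed.

Lemma is_derive_approx1 n x : is_derive (approx1 sigma f n) x (approx2 sigma f n x).
Proof. apply is_derive_add; [apply is_derive_sdq, is_derive_primf | apply is_derive_p]. Qed.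

Lemma is_derive_approx2 n x : is_derive (approx2 sigma f n) x (approx3 sigma f1 n x).
Proof. apply is_derive_add; [apply is_derive_sdq, is_derive_ext0_f | apply is_derive_p1]. Qed.

Lemma continuity_approx1 n x : continuity_pt (approx1 sigma f n) x.
Proof. exact (continuity_of_is_derive _ _ _ (is_derive_approx1 n x)). Qed.

Lemma continuity_approx3 n x : continuity_pt (approx3 sigma f1 n) x.
Proof.
  apply (continuity_pt_ext (fun y => 1 * sdq (ext0 f1) (en sigma n) y + 1 * p2 n y));
    [intro; unfold approx3; ring|].
  apply continuity_lin; [apply continuity_sdq, continuity_ext0_f1 | apply continuity_p2].
Qed.

Lemma approx1_mvt n s : exists z, s <= z <= s + 2 * en sigma n /\
  approx1 sigma f n s = ext0 f1 z + p n s.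
Proof.
  destruct (sdq_mvt2 (primf f) (ext0 f) (ext0 f1) s (en sigma n)) as [z [Hz E]].
  - apply en_pos, sigma_pos.
  - intros; apply is_derive_primf.
  - intros; apply is_derive_ext0_f.
  - exists z. split; [exact Hz|]. unfold approx1. now rewrite E.
Qed.

Lemma sdq_zero_below n s : s <= sigma - 2 * en sigma n ->
  sdq (primf f) (en sigma n) s = 0 /\ sdq (ext0 f) (en sigma n) s = 0.
Proof.
  intros Hs. pose proof (en_pos sigma n sigma_pos). split.
  - destruct (approx1_mvt n s) as [z [Hz E]]. unfold approx1 in E.
    rewrite ext0_f1_zero in E by lra. lra.
  - unfold sdq. rewrite !ext0_f_zero by lra. unfold Rdiv. ring.
Qed.

Lemma approx1_at_0 n : approx1 sigma f n 0 = 0.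
Proof.
  pose proof sigma_pos. pose proof (proj1 (en_le sigma n sigma_pos)). unfold approx1.
  rewrite (proj1 (sdq_zero_below n 0 ltac:(lra))), p_at_0. ring.
Qed.

Lemma approx1_ge n s : ext0 f1 s <= approx1 sigma f n s.
Proof.
  destruct (approx1_mvt n s) as [z [Hz E]]. rewrite E.
  pose proof (ext0_f1_nondecr s z ltac:(lra)). pose proof (p_bounds n s). lra.
Qed.

Lemma sdq_f_nonneg n s : 0 <= sdq (ext0 f) (en sigma n) s.
Proof.
  apply (sdq_nonneg _ (ext0 f1)); [apply en_pos, sigma_pos | intros; apply is_derive_ext0_f |].
  exact ext0_f1_nondecr.
Qed.

Lemma approx2_pos n s : 0 < s -> 0 < approx2 sigma f n s.
Proof. intro Hs. unfold approx2. pose proof (sdq_f_nonneg n s). pose proof (p1_pos n s Hs). lra. Qed.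

Lemma approx2_nonneg n s : 0 <= s -> 0 <= approx2 sigma f n s.
Proof.
  intro Hs. unfold approx2. pose proof (sdq_f_nonneg n s). pose proof (p1_bounds n s Hs). lra.
Qed.

(** (iii): [approx1 n] decreases in [n], since [e_(n+1) = e_n / 2], [f'] is nondecreasing
    (see [sdq_halve_step]) and [p] decreases in [n]. *)
Lemma approx1_decreasing n s : approx1 sigma f (S n) s <= approx1 sigma f n s.
Proof.
  unfold approx1. rewrite (en_S sigma n). pose proof (p_decreasing n s).
  pose proof (sdq_halve_step (primf f) (ext0 f) (ext0 f1) s (en sigma (S n))
    (en_pos _ _ sigma_pos) is_derive_primf is_derive_ext0_f ext0_f1_nondecr). lra.
Qed.

Lemma approx1_nondecr n x y : 0 <= x -> x <= y -> approx1 sigma f n x <= approx1 sigma f n y.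
Proof.
  intros Hx Hxy. apply (nondecr_of_deriv_nonneg _ (approx2 sigma f n)); [exact Hxy | |].
  - intros; apply is_derive_approx1.
  - intros; apply approx2_nonneg; lra.
Qed.

Lemma approx_convex n : convex_on Ici0 (approx sigma f n).
Proof.
  apply (convex_of_nondecr_deriv _ (approx1 sigma f n)); [apply is_derive_approx|].
  exact (approx1_nondecr n).
Qed.

(** [f_n >= f] on [[0,+oo)], so [f_n] is superlinear like [f]. *)
Lemma approx_ge n s : 0 <= s -> f s <= approx sigma f n s.
Proof.
  intros Hs. rewrite <- (ext0_pos f s Hs).
  assert (approx sigma f n 0 - ext0 f 0 <= approx sigma f n s - ext0 f s).
  { apply (nondecr_of_deriv_nonneg (fun x => approx sigma f n x - ext0 f x)
      (fun x => approx1 sigma f n x - ext0 f1 x) 0 s Hs).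
    - intros; apply is_derive_sub; [apply is_derive_approx | apply is_derive_ext0_f].
    - intros x _. pose proof (approx1_ge n x). lra. }
  rewrite approx_at_0, ext0_f_at_0 in H. lra.
Qed.

Lemma approx_superlinear n : superlinear (approx sigma f n).
Proof.
  intro M. destruct HA as (_ & _ & _ & _ & _ & _ & _ & _ & _ & Hsup & _).
  destruct (Hsup M) as [T HT]. exists (Rmax T 1). intros s Hs.
  pose proof (Rmax_l T 1). pose proof (Rmax_r T 1).
  apply Rlt_le_trans with (f s / s); [apply HT; lra|].
  unfold Rdiv. apply Rmult_le_compat_r; [apply Rlt_le, Rinv_0_lt_compat; lra|].
  apply approx_ge. lra.
Qed.

(** ** Convergence of the approximants *)

Lemma approx1_cv b : unif_approx (fun x => 0 <= x <= b) (approx1 sigma f) f1.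
Proof.
  apply (unif_approx_ext _ _ (ext0 f1)); [intros; apply ext0_pos; lra|].
  apply unif_approx_of_shifted; [intros; apply continuity_ext0_f1|].
  intros g Hg. destruct (parameters_small sigma sigma_pos (g / 2)) as [N HN]; [lra|].
  exists N. intros n x Hn Hx. destruct (HN n Hn) as [He [Hk _]].
  destruct (approx1_mvt n x) as [z [Hz E]]. exists z. split; [lra|].
  rewrite E. replace (ext0 f1 z + p n x - ext0 f1 z) with (p n x) by ring.
  pose proof (p_bounds n x). pose proof (dn_le_kn n). rewrite Rabs_right; lra.
Qed.

(** (ii) [f_n -> f] uniformly on [[0, b]], integrating (iii) from [0]. *)
Lemma approx_cv b : unif_approx (fun x => 0 <= x <= b) (approx sigma f) f.
Proof.
  intros g Hg. destruct (Rlt_le_dec b 0) as [Hb|Hb].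
  { exists 0%nat. intros n x _ Hx. lra. }
  destruct (approx1_cv b (g / (b + 1))) as [N HN]; [apply Rdiv_lt_0_compat; lra|].
  exists N. intros n x Hn Hx. rewrite <- (ext0_pos f x) by lra.
  destruct (mvt_closed (fun y => approx sigma f n y - ext0 f y)
    (fun y => approx1 sigma f n y - ext0 f1 y) 0 x) as [c [Hc E]]; [lra | |].
  { intros; apply is_derive_sub; [apply is_derive_approx | apply is_derive_ext0_f]. }
  rewrite approx_at_0, ext0_f_at_0, !Rminus_0_r in E.
  rewrite E, Rabs_mult, (Rabs_right x) by lra. rewrite (ext0_pos f1 c) by lra.
  pose proof (HN n c Hn ltac:(lra)). pose proof (Rabs_pos (approx1 sigma f n c - f1 c)).
  apply Rle_trans with (g / (b + 1) * b); [apply Rmult_le_compat; lra|].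
  apply Rmult_le_reg_r with (b + 1); [lra|].
  replace (g / (b + 1) * b * (b + 1)) with (g * b) by (field; lra). nra.
Qed.

(** [f_n'' -> h] on [[a, b]] for any continuous [h] which is a derivative of [f'] there:
    [f_n''(x)] is [h] at a point of [[x, x + 2 e_n]], plus [p1 n x = O(k_n)]. *)
Lemma approx2_cv_of (h : R -> R) a b : 0 < a ->
  (forall x, a <= x -> is_derive (ext0 f1) x (h x)) ->
  (forall x, a <= x <= b + 1 -> continuity_pt h x) ->
  unif_approx (fun x => a <= x <= b) (approx2 sigma f) h.
Proof.
  intros Ha Hd Hc. apply unif_approx_of_shifted; [exact Hc|].
  intros g Hg. destruct (parameters_small sigma sigma_pos (g / 2)) as [N HN]; [lra|].
  exists N. intros n x Hn Hx. destruct (HN n Hn) as [He [Hk _]].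
  pose proof (en_pos sigma n sigma_pos).
  destruct (sdq_mvt2 (ext0 f) (ext0 f1) h x (en sigma n)) as [z [Hz E]];
    [lra | intros; apply is_derive_ext0_f | intros; apply Hd; lra |].
  exists z. split; [lra|]. unfold approx2. rewrite E.
  replace (h z + p1 n x - h z) with (p1 n x) by ring.
  pose proof (p1_bounds n x ltac:(lra)). pose proof (dn_le_kn n). rewrite Rabs_right; lra.
Qed.

Lemma approx2_cv_f2 a b : sigma < a -> unif_approx (fun x => a <= x <= b) (approx2 sigma f) f2.
Proof.
  intros Ha. pose proof sigma_pos. apply approx2_cv_of; [lra | |].
  - intros x Hx. apply is_derive_ext0_f1_f2. lra.
  - intros x Hx. apply continuity_f2. lra.
Qed.

Lemma approx2_cv_g2 (g2 : R -> R) a b : deriv_on (Ioi 0) f1 g2 -> cont_on (Ioi 0) g2 -> 0 < a ->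
  unif_approx (fun x => a <= x <= b) (approx2 sigma f) g2.
Proof.
  intros Hd Hc Ha. apply approx2_cv_of; [exact Ha | |].
  - intros x Hx. apply (is_derive_ext0_f1 (Ioi 0)); [lra | apply Ioi_nbhd | exact Hd | unfold Ioi]; lra.
  - intros x Hx. apply (continuity_of_cont_on (Ioi 0)); [apply Ioi_nbhd | exact Hc | unfold Ioi]; lra.
Qed.

Lemma f2_lower_bound a b : sigma < a -> exists m, 0 < m /\ forall x, a <= x <= b -> m <= f2 x.
Proof.
  intros Ha. destruct (Rle_lt_dec a b) as [Hab|Hab].
  - destruct (continuity_ab_min f2 a b Hab) as [mx [Hmin Hmx]].
    { intros c Hc. apply continuity_f2. lra. }
    exists (f2 mx). split; [apply f2_pos; lra | exact Hmin].
  - exists 1. split; [lra|]. intros x Hx. lra.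
Qed.

Lemma bn_cv a b : sigma < a ->
  unif_approx (fun x => a <= x <= b) (fun n => bn_fun (approx2 sigma f n)) (b_fun sigma f2).
Proof.
  intros Ha. pose proof sigma_pos. destruct (f2_lower_bound a b Ha) as [m [Hm Hmin]].
  apply (unif_approx_ext _ _ (fun x => x ^ 2 / f2 x)).
  { intros x Hx. unfold b_fun. destruct (Rlt_dec sigma x); [reflexivity | lra]. }
  apply (unif_approx_div _ (fun _ x => x ^ 2) _ _ _ m (b ^ 2) Hm Hmin).
  - intros x Hx. rewrite Rabs_right by nra. nra.
  - intros g Hg. exists 0%nat. intros. rewrite Rminus_diag, Rabs_R0. lra.
  - exact (approx2_cv_f2 a b Ha).
Qed.

Lemma an_cv_far a b : sigma < a ->
  unif_approx (fun x => a <= x <= b) (fun n => an_fun (approx1 sigma f n) (approx2 sigma f n))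
    (a_fun sigma f1 f2).
Proof.
  intros Ha. pose proof sigma_pos. destruct (f2_lower_bound a b Ha) as [m [Hm Hmin]].
  apply (unif_approx_ext _ _ (fun x => f1 x / (x * f2 x))).
  { intros x Hx. unfold a_fun. destruct (Rlt_dec sigma x); [reflexivity | lra]. }
  apply (unif_approx_div _ _ _ _ _ (a * m) (ext0 f1 b)); [nra | | | |].
  - intros x Hx. pose proof (Hmin x Hx). apply Rmult_le_compat; lra.
  - intros x Hx. rewrite <- (ext0_pos f1 x) by lra. pose proof (ext0_f1_nonneg x).
    rewrite Rabs_right by lra. apply ext0_f1_nondecr. lra.
  - apply (unif_approx_sub (fun x => 0 <= x <= b)); [intros; lra | apply approx1_cv].
  - apply (unif_approx_scale _ (fun x => x) _ _ b); [intros x Hx; rewrite Rabs_right; lra|].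
    now apply approx2_cv_f2.
Qed.

(** (v), (vi): below [sigma - 2 e_n], [f_n = P_n], whose quotients are [O(k_n s)]. *)
Lemma approx_near_0 n s : 0 < s -> s <= sigma - 2 * en sigma n ->
  Rabs ((s * approx2 sigma f n s - approx1 sigma f n s) / s ^ 3) <= kn n * s /\
  Rabs (approx1 sigma f n s / s) <= kn n * s.
Proof.
  intros Hs Hle. destruct (sdq_zero_below n s Hle) as [E1 E2].
  unfold approx1, approx2. rewrite E1, E2, !Rplus_0_l.
  pose proof (dn_le_kn n). pose proof (dn_pos n). assert (0 < s ^ 3) by (apply pow_lt; lra).
  unfold Rdiv. rewrite !Rabs_mult, Rabs_inv, Rabs_inv, (Rabs_right (s ^ 3)), (Rabs_right s) by lra.
  split.
  - apply Rmult_le_reg_r with (s ^ 3); [lra|]. rewrite Rmult_assoc, Rinv_l, Rmult_1_r by lra.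
    replace (kn n * s * s ^ 3) with (kn n * s ^ 4) by ring. now apply p_third_order; lra.
  - apply Rmult_le_reg_r with s; [lra|]. rewrite Rmult_assoc, Rinv_l, Rmult_1_r by lra.
    destruct (p_bounds n s) as [[Hp0 _] Hp1]. rewrite Rabs_right by lra. nra.
Qed.

Lemma approx_quotients_at_0 n :
  limit1_in (fun s => (s * approx2 sigma f n s - approx1 sigma f n s) / s ^ 3) (Ioi 0) 0 0 /\
  limit1_in (fun s => approx1 sigma f n s / s) (Ioi 0) 0 0.
Proof.
  pose proof sigma_pos as Hs. pose proof (proj1 (en_le sigma n Hs)).
  pose proof (dn_le_kn n). pose proof (dn_pos n).
  assert (Hd : forall eps, 0 < eps -> 0 < Rmin (sigma / 2) (eps / (kn n + 1)))
    by (intros; apply Rmin_pos; [lra | apply Rdiv_lt_0_compat; lra]).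
  assert (Hks : forall eps s, 0 < eps -> 0 < s -> s < Rmin (sigma / 2) (eps / (kn n + 1)) ->
    s <= sigma - 2 * en sigma n /\ kn n * s < eps).
  { intros eps s He Hs0 Hsd. pose proof (Rmin_l (sigma / 2) (eps / (kn n + 1))).
    pose proof (Rmin_r (sigma / 2) (eps / (kn n + 1))). split; [lra|].
    apply Rle_lt_trans with (kn n * (eps / (kn n + 1))); [apply Rmult_le_compat_l; lra|].
    apply Rmult_lt_reg_r with (kn n + 1); [lra|].
    replace (kn n * (eps / (kn n + 1)) * (kn n + 1)) with (kn n * eps) by (field; lra). nra. }
  split; intros eps Heps; exists (Rmin (sigma / 2) (eps / (kn n + 1)));
    (split; [now apply Hd|]); intros s [Hs0 Hsd]; unfold Ioi in Hs0;
    change (dist R_met ?a ?b) with (R_dist a b) in Hsd |- *; unfold R_dist in Hsd |- *;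
    rewrite Rminus_0_r in Hsd |- *; rewrite Rabs_right in Hsd by lra;
    destruct (Hks eps s Heps Hs0 Hsd) as [Hle Hk]; destruct (approx_near_0 n s Hs0 Hle); lra.
Qed.

Lemma approx_quotients_cv b : b < sigma ->
  unif_approx (fun x => 0 <= x <= b)
    (fun n s => (s * approx2 sigma f n s - approx1 sigma f n s) / s ^ 3) (fun _ => 0) /\
  unif_approx (fun x => 0 <= x <= b) (fun n s => approx1 sigma f n s / s) (fun _ => 0).
Proof.
  intros Hb. pose proof sigma_pos.
  assert (Hsmall : forall g, 0 < g -> exists N, forall n x, (N <= n)%nat -> 0 < x <= b ->
    x <= sigma - 2 * en sigma n /\ kn n * x <= g).
  { intros g Hg. destruct (parameters_small sigma sigma_pos
      (Rmin ((sigma - b) / 2) (g / (sigma + 1)))) as [N HN].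
    { apply Rmin_pos; apply Rdiv_lt_0_compat; lra. }
    exists N. intros n x Hn Hx. destruct (HN n Hn) as [He [Hk _]].
    pose proof (Rmin_l ((sigma - b) / 2) (g / (sigma + 1))).
    pose proof (Rmin_r ((sigma - b) / 2) (g / (sigma + 1))). pose proof (dn_le_kn n).
    pose proof (dn_pos n). split; [lra|].
    apply Rle_trans with (g / (sigma + 1) * sigma); [apply Rmult_le_compat; lra|].
    apply Rmult_le_reg_r with (sigma + 1); [lra|].
    replace (g / (sigma + 1) * sigma * (sigma + 1)) with (g * sigma) by (field; lra). nra. }
  split; intros g Hg; destruct (Hsmall g Hg) as [N HN]; exists N; intros n x Hn Hx;
    rewrite Rminus_0_r;
    (destruct (Req_dec x 0) as [->|Hx0];
      [rewrite approx1_at_0;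
       match goal with |- Rabs ?e <= _ => replace e with 0 by (unfold Rdiv; ring) end;
       rewrite Rabs_R0; lra|]);
    destruct (HN n x Hn ltac:(lra)) as [Hle Hk]; destruct (approx_near_0 n x ltac:(lra) Hle); lra.
Qed.

(** ** Convergence of [a_n] near [sigma], where [a] is assumed nondecreasing *)

Section MonotoneA.

Context {tsig : R}.
Hypothesis Htsig : sigma < tsig.
Hypothesis Ha_mono : nondecr_on (fun s => sigma <= s <= tsig) (a_fun sigma f1 f2).

(** [a] vanishes on [(-oo, sigma]], so it is nondecreasing on [(-oo, tsig]]. *)
Lemma a_fun_le y u : y <= u -> u <= tsig -> a_fun sigma f1 f2 y <= a_fun sigma f1 f2 u.
Proof.
  intros Hyu Hu. destruct (Rle_dec y sigma) as [Hy|Hy].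
  - unfold a_fun at 1. destruct (Rlt_dec sigma y); [lra|]. apply a_fun_nonneg.
  - apply Ha_mono; lra.
Qed.

(** [a] tends to [0] at [sigma+]: otherwise [f'' <= f' / (sigma eps)] right of [sigma],
    and Gronwall's estimate would force [f'(tsig) = 0]. *)
Lemma a_fun_small eps : 0 < eps -> exists u, sigma < u <= tsig /\ a_fun sigma f1 f2 u < eps.
Proof.
  intros Heps. pose proof sigma_pos. apply NNPP. intro Hno.
  assert (Hge : forall u, sigma < u <= tsig -> eps <= a_fun sigma f1 f2 u).
  { intros u Hu. apply Rnot_lt_le. intro Hlt. apply Hno. now exists u. }
  assert (Htsig0 : ext0 f1 tsig <= 0).
  { apply (gronwall_zero (ext0 f1) f2 sigma tsig (/ (sigma * eps))); [lra | | | |].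
    - intros x Hx. apply is_derive_ext0_f1_f2. lra.
    - intros; apply continuity_ext0_f1.
    - intros x Hx. rewrite ext0_pos, a_fun_eq by lra.
      pose proof (f2_pos x ltac:(lra)). pose proof (Hge x ltac:(lra)).
      apply Rmult_le_reg_l with (sigma * eps); [nra|].
      rewrite <- Rmult_assoc, Rinv_r, Rmult_1_l by nra.
      apply Rmult_le_compat_r; [lra | apply Rmult_le_compat; lra].
    - apply ext0_f1_zero. lra. }
  pose proof (ext0_f1_increasing sigma tsig (Rle_refl _) Htsig) as Hinc.
  rewrite (ext0_f1_zero sigma) in Hinc by lra. lra.
Qed.

(** With [c = t a(t)], the function [f - c f'] is nonincreasing left of [t <= tsig],
    since its derivative [f'' (s a(s) - c)] is [<= 0]. *)
Lemma f_minus_c_f1_nonincr t u v : t <= tsig -> u <= v -> v <= t ->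
  ext0 f v - t * a_fun sigma f1 f2 t * ext0 f1 v <= ext0 f u - t * a_fun sigma f1 f2 t * ext0 f1 u.
Proof.
  intros Ht Huv Hvt. pose proof sigma_pos. set (c := t * a_fun sigma f1 f2 t).
  set (phi := fun x => ext0 f x - c * ext0 f1 x).
  change (phi v <= phi u).
  destruct (Rle_dec v sigma) as [Hv|Hv].
  { unfold phi. rewrite !ext0_f_zero, !ext0_f1_zero by lra. lra. }
  set (w := Rmax u sigma).
  assert (Hw : phi w <= phi u).
  { unfold w, Rmax. destruct (Rle_dec u sigma); [|lra].
    unfold phi. rewrite !ext0_f_zero, !ext0_f1_zero by lra. lra. }
  assert (Hw1 : sigma <= w) by apply Rmax_r.
  assert (Hw2 : w <= v) by (apply Rmax_lub; lra).
  destruct (mvt_open phi (fun x => if Rlt_dec sigma x then ext0 f1 x - c * f2 x else 0) w v)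
    as [z [Hz E]]; [lra | | |].
  - intros x Hx. destruct (Rlt_dec sigma x); [|lra]. unfold phi.
    apply is_derive_sub; [apply is_derive_ext0_f | apply is_derive_mulc, is_derive_ext0_f1_f2; lra].
  - intros x Hx. unfold phi. apply (continuity_pt_ext (fun y => 1 * ext0 f y + (- c) * ext0 f1 y));
      [intro; ring|].
    apply continuity_lin; [exact (continuity_of_is_derive _ _ _ (is_derive_ext0_f x)) |
      apply continuity_ext0_f1].
  - assert (Hd : (if Rlt_dec sigma z then ext0 f1 z - c * f2 z else 0) <= 0).
    { destruct (Rlt_dec sigma z); [|lra].
      rewrite ext0_pos, (a_fun_eq z) by lra. pose proof (f2_pos z r).
      pose proof (a_fun_nonneg z). pose proof (a_fun_le z t ltac:(lra) Ht).
      assert (z * a_fun sigma f1 f2 z <= c) by (apply Rmult_le_compat; lra). nra. }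
    nra.
Qed.

Lemma sdq_le_a_sdq (F : R -> R) s e : (forall x, is_derive F x (ext0 f x)) -> 0 < e ->
  s + 2 * e <= tsig ->
  sdq F e s <= (s + 2 * e) * a_fun sigma f1 f2 (s + 2 * e) * sdq (ext0 f) e s.
Proof.
  intros HF He Hse. set (c := (s + 2 * e) * a_fun sigma f1 f2 (s + 2 * e)).
  destruct (second_difference_mvt1 (fun x => F x - c * ext0 f x)
    (fun x => ext0 f x - c * ext0 f1 x) s e He) as (z1 & z2 & Hz1 & Hz2 & E).
  { intros y Hy. apply is_derive_sub; [apply HF | apply is_derive_mulc, is_derive_ext0_f]. }
  pose proof (f_minus_c_f1_nonincr (s + 2 * e) z1 z2 Hse ltac:(lra) ltac:(lra)).
  unfold sdq. assert (0 < e ^ 2) by nra.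
  apply Rmult_le_reg_r with (e ^ 2); [lra|].
  replace (c * ((ext0 f (s + 2 * e) - 2 * ext0 f (s + e) + ext0 f s) / e ^ 2) * e ^ 2)
    with (c * (ext0 f (s + 2 * e) - 2 * ext0 f (s + e) + ext0 f s)) by (field; lra).
  replace ((F (s + 2 * e) - 2 * F (s + e) + F s) / e ^ 2 * e ^ 2)
    with (F (s + 2 * e) - 2 * F (s + e) + F s) by (field; lra).
  fold c in H. nra.
Qed.

Lemma an_le_near n x : 0 < x -> x + 2 * en sigma n <= tsig ->
  0 <= an_fun (approx1 sigma f n) (approx2 sigma f n) x <=
  (x + 2 * en sigma n) * a_fun sigma f1 f2 (x + 2 * en sigma n) / x
  + (1 + x ^ 2) / (2 * INR (n + 2)).
Proof.
  intros Hx Hxe. pose proof (en_pos sigma n sigma_pos).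
  set (c := (x + 2 * en sigma n) * a_fun sigma f1 f2 (x + 2 * en sigma n)).
  set (k := x * (1 + x ^ 2) / (2 * INR (n + 2))).
  assert (Hm : 0 < INR (n + 2)) by (apply lt_0_INR; lia).
  assert (Hpk : p n x = k * p1 n x).
  { unfold k. apply Rmult_eq_reg_r with (2 * INR (n + 2)); [|lra].
    rewrite p_p1_ratio. field. lra. }
  pose proof (sdq_le_a_sdq (primf f) x (en sigma n) is_derive_primf ltac:(lra) Hxe) as Hkey. fold c in Hkey.
  pose proof (sdq_f_nonneg n x). pose proof (p1_bounds n x ltac:(lra)).
  pose proof (approx2_pos n x Hx).
  assert (0 <= c) by (apply Rmult_le_pos; [lra | apply a_fun_nonneg]).
  assert (0 <= k) by (unfold k; apply Rdiv_le_0_compat; nra).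
  assert (Hle : approx1 sigma f n x <= (c + k) * approx2 sigma f n x).
  { unfold approx1, approx2. rewrite Hpk.
    assert (0 <= c * p1 n x) by (apply Rmult_le_pos; lra).
    assert (0 <= k * sdq (ext0 f) (en sigma n) x) by (apply Rmult_le_pos; lra). nra. }
  assert (0 <= approx1 sigma f n x)
    by (pose proof (approx1_ge n x); pose proof (ext0_f1_nonneg x); lra).
  unfold an_fun. split; [apply Rdiv_le_0_compat; nra|].
  replace (c / x + (1 + x ^ 2) / (2 * INR (n + 2))) with
    ((c + k) * approx2 sigma f n x / (x * approx2 sigma f n x)) by (unfold k; field; lra).
  unfold Rdiv. apply Rmult_le_compat_r; [apply Rlt_le, Rinv_0_lt_compat; nra | exact Hle].
Qed.

Lemma an_le_near_unif n x u a0 b : 0 < a0 <= x -> x <= b -> x + 2 * en sigma n <= u ->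
  u <= tsig -> 0 <= an_fun (approx1 sigma f n) (approx2 sigma f n) x <=
  tsig / a0 * a_fun sigma f1 f2 u + (1 + b ^ 2) / INR (n + 2).
Proof.
  intros Hx Hxb Hxu Hu. pose proof sigma_pos. pose proof (en_pos sigma n sigma_pos).
  destruct (an_le_near n x ltac:(lra) ltac:(lra)) as [Han0 Han].
  set (e := en sigma n) in *. split; [exact Han0|].
  assert (0 < INR (n + 2)) by (apply lt_0_INR; lia).
  pose proof (a_fun_le (x + 2 * e) u Hxu Hu). pose proof (a_fun_nonneg (x + 2 * e)).
  assert (Hterm1 : (x + 2 * e) * a_fun sigma f1 f2 (x + 2 * e) / x <= tsig / a0 * a_fun sigma f1 f2 u).
  { replace ((x + 2 * e) * a_fun sigma f1 f2 (x + 2 * e) / x) with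
      ((x + 2 * e) / x * a_fun sigma f1 f2 (x + 2 * e)) by (field; lra).
    apply Rmult_le_compat; [apply Rdiv_le_0_compat; lra | lra | | lra].
    apply Rmult_le_reg_r with (a0 * x); [nra|].
    replace ((x + 2 * e) / x * (a0 * x)) with ((x + 2 * e) * a0) by (field; lra).
    replace (tsig / a0 * (a0 * x)) with (tsig * x) by (field; lra). nra. }
  assert (Hterm2 : (1 + x ^ 2) / (2 * INR (n + 2)) <= (1 + b ^ 2) / INR (n + 2)).
  { apply Rmult_le_reg_r with (2 * INR (n + 2)); [lra|].
    replace ((1 + x ^ 2) / (2 * INR (n + 2)) * (2 * INR (n + 2))) with (1 + x ^ 2) by (field; lra).
    replace ((1 + b ^ 2) / INR (n + 2) * (2 * INR (n + 2))) with (2 * (1 + b ^ 2)) by (field; lra).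
    nra. }
  lra.
Qed.

(** (vii), first half: [a_n -> a] uniformly on [[a0, b]], [a0 > 0].  Right of some
    [sigma + eta] this is [an_cv_far]; left of it both [a] and [a_n] are small. *)
Lemma an_cv a0 b : 0 < a0 ->
  unif_approx (fun x => a0 <= x <= b) (fun n => an_fun (approx1 sigma f n) (approx2 sigma f n))
    (a_fun sigma f1 f2).
Proof.
  intros Ha0 g Hg. pose proof sigma_pos.
  set (eps := Rmin (g / 2) (g * a0 / (4 * tsig))).
  assert (Heps : 0 < eps /\ eps <= g / 2 /\ eps <= g * a0 / (4 * tsig)).
  { unfold eps. repeat split; [apply Rmin_pos; [|apply Rdiv_lt_0_compat]; nra |
      apply Rmin_l | apply Rmin_r]. }
  destruct (a_fun_small eps (proj1 Heps)) as [u [Hu Hau]].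
  set (eta := (u - sigma) / 2).
  destruct (an_cv_far (sigma + eta) b ltac:(unfold eta; lra) g Hg) as [N1 HN1].
  set (g' := Rmin (eta / 4) (g / (4 * (1 + b ^ 2)))).
  assert (Hg' : 0 < g' /\ g' <= eta / 4 /\ g' <= g / (4 * (1 + b ^ 2))).
  { unfold g'. repeat split; [apply Rmin_pos; [|apply Rdiv_lt_0_compat]; unfold eta; nra |
      apply Rmin_l | apply Rmin_r]. }
  destruct Hg' as (Hg'0 & Hg'1 & Hg'2).
  destruct (parameters_small sigma sigma_pos g' Hg'0) as [N2 HN2].
  exists (max N1 N2). intros n x Hn Hx.
  destruct (Rle_dec (sigma + eta) x) as [Hfar|Hnear]; [apply HN1; [lia | lra]|].
  destruct (HN2 n ltac:(lia)) as [He [_ Hm]].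
  destruct (an_le_near_unif n x u a0 b ltac:(lra) ltac:(lra) ltac:(unfold eta in *; lra)
    ltac:(lra)) as [Han0 Han].
  assert (Hax : 0 <= a_fun sigma f1 f2 x <= g / 2).
  { split; [apply a_fun_nonneg|]. pose proof (a_fun_le x u ltac:(unfold eta in *; lra) (proj2 Hu)).
    lra. }
  assert (Hterm1 : tsig / a0 * a_fun sigma f1 f2 u <= g / 4).
  { apply Rle_trans with (tsig / a0 * (g * a0 / (4 * tsig))); [|right; field; lra].
    apply Rmult_le_compat_l; [apply Rdiv_le_0_compat|]; lra. }
  assert (Hterm2 : (1 + b ^ 2) / INR (n + 2) <= g / 4).
  { unfold Rdiv at 1. apply Rle_trans with ((1 + b ^ 2) * (g / (4 * (1 + b ^ 2))));
      [apply Rmult_le_compat_l; nra | right; field; nra]. }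
  unfold Rabs. destruct Rcase_abs; lra.
Qed.

End MonotoneA.

End StandingAssumptions.

Theorem theorem3p4 (sigma : R) (f f1 f2 f3 : R -> R) :
  assumptions_A sigma f f1 f2 f3 ->
  (exists tsigma, sigma < tsigma /\
     nondecr_on (fun s => sigma <= s <= tsigma) (a_fun sigma f1 f2)) ->
  exists fn fn1 fn2 fn3 : nat -> R -> R,
    (* convexity, f_n(0) = 0, superlinearity *)
    (forall n, convex_on Ici0 (fn n) /\ fn n 0 = 0 /\ superlinear (fn n)) /\
    (* (i) f_n in C^1([0,+oo)) and C^3((0,+oo)) *)
    (forall n, deriv_on Ici0 (fn n) (fn1 n) /\ cont_on Ici0 (fn1 n) /\
               deriv_on (Ioi 0) (fn1 n) (fn2 n) /\ deriv_on (Ioi 0) (fn2 n) (fn3 n) /\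
               cont_on (Ioi 0) (fn3 n)) /\
    (* (ii) *)
    unif_cv_compacts Ici0 fn f /\
    (* (iii) *)
    (forall n, fn1 n 0 = 0) /\
    (forall n s, 0 <= s -> fn1 (S n) s <= fn1 n s) /\
    unif_cv_compacts Ici0 fn1 f1 /\
    (* (iv) *)
    (forall n s, 0 < s -> 0 < fn2 n s) /\
    (* (v) *)
    (forall n,
       limit1_in (fun s => (s * fn2 n s - fn1 n s) / s ^ 3) (Ioi 0) 0 0 /\
       limit1_in (fun s => fn1 n s / s) (Ioi 0) 0 0) /\
    (* (vi) *)
    unif_cv_compacts (fun s => 0 <= s < sigma)
      (fun n s => (s * fn2 n s - fn1 n s) / s ^ 3) (fun _ => 0) /\
    unif_cv_compacts (fun s => 0 <= s < sigma)
      (fun n s => fn1 n s / s) (fun _ => 0) /\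
    (* (vii) *)
    unif_cv_compacts (Ioi 0) (fun n => an_fun (fn1 n) (fn2 n)) (a_fun sigma f1 f2) /\
    unif_cv_compacts (Ioi sigma) (fun n => bn_fun (fn2 n)) (b_fun sigma f2) /\
    (* (viii) *)
    (forall g2 : R -> R,
       deriv_on (Ioi 0) f1 g2 -> cont_on (Ioi 0) g2 ->
       unif_cv_compacts (Ioi 0) fn2 g2).
Proof.
  intros HA [tsig [Ht Hmono]].
  exists (approx sigma f), (approx1 sigma f), (approx2 sigma f), (approx3 sigma f1).
  repeat split.
  - apply (approx_convex HA).
  - apply approx_at_0.
  - apply (approx_superlinear HA).
  - apply deriv_on_of_is_derive. intros; apply (is_derive_approx HA).
  - apply cont_on_of_continuity. intros; apply (continuity_approx1 HA).
  - apply deriv_on_of_is_derive. intros; apply (is_derive_approx1 HA).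
  - apply deriv_on_of_is_derive. intros; apply (is_derive_approx2 HA).
  - apply cont_on_of_continuity. intros; apply (continuity_approx3 HA).
  - apply ucc_Ici0, (approx_cv HA).
  - apply (approx1_at_0 HA).
  - intros n s _. apply (approx1_decreasing HA).
  - apply ucc_Ici0, (approx1_cv HA).
  - apply (approx2_pos HA).
  - apply (approx_quotients_at_0 HA).
  - apply (approx_quotients_at_0 HA).
  - apply ucc_Ico0. intros b Hb. apply (approx_quotients_cv HA b Hb).
  - apply ucc_Ico0. intros b Hb. apply (approx_quotients_cv HA b Hb).
  - apply ucc_Ioi. intros a b Ha. apply (an_cv HA Ht Hmono a b Ha).
  - apply ucc_Ioi. intros a b Ha. apply (bn_cv HA a b Ha).
  - intros g2 Hd Hc. apply ucc_Ioi. intros a b Ha. apply (approx2_cv_g2 HA g2 a b Hd Hc Ha).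
Qed.
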